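(* Let $\mathcal{B}=\langle V,F,E\rangle$ be a self-contained finite bipartite graph and let $\mathcal{S}_F$ be the set of minimal self-contained sets in $\mathcal{B}$. Then the sets in $\mathcal{S}_F$ are pairwise disjoint, and the sets in $\mathcal{S}_V=\{\mathrm{adj}_{\mathcal{B}}(S):S\in\mathcal{S}_F\}$ are pairwise disjoint.
   Context: $\mathcal{B}=\langle V,F,E\rangle$ is bipartite with variable vertices $V$ and constraint vertices $F$; $\mathrm{adj}_{\mathcal{B}}(X)$ is the set of vertices adjacent to some vertex of $X$. A set $F'\subseteq F$ is self-contained if $|F'|=|\mathrm{adj}_{\mathcal{B}}(F')|$ and $|F''|\le|\mathrm{adj}_{\mathcal{B}}(F'')|$ for all $F''\subseteq F'$. $\mathcal{B}$ is self-contained if $|F|=|V|$ and $F$ is self-contained. A non-empty self-contained set is minimal self-contained if none of its non-empty strict subsets is self-contained. *)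

From mathcomp Require Import all_boot.
Set Implicit Arguments. Unset Strict Implicit. Unset Printing Implicit Defensive.

(* A finite bipartite graph B = <V, F, E>: variable vertices V, constraint
   vertices F (finite types), edges given by E f v (f in F adjacent to v in V). *)

Definition adjF (V F : finType) (E : F -> V -> bool) (F' : {set F}) : {set V} :=
  [set v | [exists f in F', E f v]].

Definition self_contained (V F : finType) (E : F -> V -> bool) (F' : {set F}) : Prop :=
  #|F'| = #|adjF E F'| /\
  (forall F'' : {set F}, F'' \subset F' -> #|F''| <= #|adjF E F''|).

Definition graph_self_contained (V F : finType) (E : F -> V -> bool) : Prop :=
  #|F| = #|V| /\ self_contained E [set: F].

Definition minimal_self_contained (V F : finType) (E : F -> V -> bool) (S : {set F}) : Prop :=
  S != set0 /\ self_contained E S /\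
  (forall S' : {set F}, S' != set0 -> S' \proper S -> ~ self_contained E S').

(* Under Hall's condition |X| <= |adj X|, call X tight when equality holds;
   then the self-contained sets are exactly the tight ones.  Since adj turns
   unions into unions and intersections into subsets of intersections,
   counting |A u B| + |A n B| against |adj A u adj B| + |adj A n adj B| shows
   that the intersection of two tight sets is tight and has adjacency
   adj A n adj B.  A minimal self-contained set S therefore lies inside every
   tight set it meets, so two distinct minimal ones are disjoint, and then
   adj S1 n adj S2 = adj (S1 n S2) = adj set0 is empty. *)

From mathcomp Require Import all_boot.
From mathcomp Require Import zify.

Section SelfContained.

Variables (V F : finType) (E : F -> V -> bool).

Lemma adjF_set0 : adjF E set0 = set0.
Proof. by apply/setP=> v; rewrite !inE; apply/existsP=> -[f]; rewrite inE. Qed.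

Lemma adjF_setU (A B : {set F}) : adjF E (A :|: B) = adjF E A :|: adjF E B.
Proof.
apply/setP=> v; rewrite !inE; apply/existsP/orP.
- by case=> f /andP[]; rewrite inE => /orP[] fA Efv; [left|right];
     apply/existsP; exists f; rewrite fA.
- by case=> /existsP[f /andP[fA Efv]]; exists f; rewrite inE fA ?orbT.
Qed.

Lemma adjF_setI_subset (A B : {set F}) :
  adjF E (A :&: B) \subset adjF E A :&: adjF E B.
Proof.
apply/subsetP=> v; rewrite !inE => /existsP[f /andP[]]; rewrite inE.
by case/andP=> fA fB Efv; apply/andP; split; apply/existsP; exists f;
   rewrite ?fA ?fB.
Qed.

Hypothesis hall : forall X : {set F}, #|X| <= #|adjF E X|.

Lemma self_containedP (X : {set F}) :
  self_contained E X <-> #|X| = #|adjF E X|.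
Proof. by split=> [[]|tightX] //; split=> // Y _; apply: hall. Qed.

Lemma tight_setI (A B : {set F}) :
  #|A| = #|adjF E A| -> #|B| = #|adjF E B| ->
  #|A :&: B| = #|adjF E (A :&: B)| /\
  #|adjF E (A :&: B)| = #|adjF E A :&: adjF E B|.
Proof.
move=> tightA tightB.
have cardF := cardsUI A B.
have cardV := cardsUI (adjF E A) (adjF E B).
have hallU := hall (A :|: B); rewrite adjF_setU in hallU.
have hallI := hall (A :&: B).
have adjI := subset_leq_card (adjF_setI_subset A B).
lia.
Qed.

Lemma self_containedI (A B : {set F}) :
  self_contained E A -> self_contained E B -> self_contained E (A :&: B).
Proof.
by move=> /self_containedP tA /self_containedP tB;
   apply/self_containedP; case: (tight_setI _ _ tA tB).
Qed.

Lemma adjF_setI (A B : {set F}) :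
  self_contained E A -> self_contained E B ->
  adjF E (A :&: B) = adjF E A :&: adjF E B.
Proof.
move=> /self_containedP tA /self_containedP tB.
have [_ cardI] := tight_setI _ _ tA tB.
by apply/eqP; rewrite eqEcard adjF_setI_subset cardI /=.
Qed.

Lemma minimal_self_contained_sub (S T : {set F}) :
  minimal_self_contained E S -> self_contained E T -> S :&: T != set0 ->
  S \subset T.
Proof.
move=> [_ [scS minS]] scT meet.
have [properI | ] := boolP (S :&: T \proper S).
  by case: (minS _ meet properI); apply: self_containedI.
by rewrite properEneq subsetIl andbT negbK => /eqP <-; apply: subsetIr.
Qed.

Lemma minimal_self_contained_disjoint (S1 S2 : {set F}) :
  minimal_self_contained E S1 -> minimal_self_contained E S2 -> S1 != S2 ->
  [disjoint S1 & S2].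
Proof.
move=> min1 min2; apply: contraR; rewrite -setI_eq0 => meet.
have [_ [sc1 _]] := min1; have [_ [sc2 _]] := min2.
rewrite eqEsubset !minimal_self_contained_sub //.
by rewrite setIC.
Qed.

Lemma adjF_disjoint (A B : {set F}) :
  self_contained E A -> self_contained E B -> [disjoint A & B] ->
  [disjoint adjF E A & adjF E B].
Proof.
by move=> scA scB; rewrite -!setI_eq0 -adjF_setI // => /eqP ->; rewrite adjF_set0.
Qed.

End SelfContained.

Theorem lemma32 (V F : finType) (E : F -> V -> bool) :
  graph_self_contained E ->
  (forall S1 S2 : {set F},
      minimal_self_contained E S1 -> minimal_self_contained E S2 -> S1 != S2 ->
      [disjoint S1 & S2]) /\
  (forall S1 S2 : {set F},
      minimal_self_contained E S1 -> minimal_self_contained E S2 ->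
      adjF E S1 != adjF E S2 ->
      [disjoint adjF E S1 & adjF E S2]).
Proof.
case=> _ [_ hallT].
have hall (X : {set F}) : #|X| <= #|adjF E X| by apply/hallT/subsetT.
split=> S1 S2 min1 min2 neq.
  exact: minimal_self_contained_disjoint.
have neqS : S1 != S2 by apply: contraNneq neq => ->.
have [_ [sc1 _]] := min1; have [_ [sc2 _]] := min2.
exact/adjF_disjoint/minimal_self_contained_disjoint.
Qed.
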